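(* (a) Let $n\ge 7$ and let $TL_n(a,a-1,1)$ be a 6-valent first-kind Frobenius circulant with cyclic kernel, where $n\equiv 1 \pmod 6$ and $a$ is a solution of $x^2-x+1\equiv 0 \pmod n$. Then $TL_n(a,a-1,1)$ is isomorphic to $EJ_\alpha$ for some $\alpha=c+d\rho\in\mathbb{Z}[\rho]$ with $\gcd(c,d)=1$. Moreover, letting $k$ be the integer defined by $a^2-a+1=kn$, one has $\alpha=(rn+m)+(sn-ma)\rho$, or $\alpha=(rn+m)+(sn+m(a-1))\rho$, or $\alpha=(rn+ma)+(sn-m(a-1))\rho$, where $(m,r,s)$ is an integer solution of, respectively, $$km^2-[(a-2)r+(2a-1)s]m+(r^2+rs+s^2)n=1,$$ $$km^2+[(a+1)r+(2a-1)s]m+(r^2+rs+s^2)n=1,$$ $$km^2+[(a+1)r-(a-2)s]m+(r^2+rs+s^2)n=1.$$ (b) Let $\alpha=c+d\rho\in\mathbb{Z}[\rho]$ with $N(\alpha)\ge 7$ and $\gcd(c,d)=1$. Then $EJ_\alpha$ is isomorphic to a 6-valent first-kind Frobenius circulant with cyclic kernel if and only if $N(\alpha)\equiv 1 \pmod 6$.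
   Context: $\rho=(1+\sqrt{-3})/2$, $\mathbb{Z}[\rho]=\{x+y\rho: x,y\in\mathbb{Z}\}$ is the ring of Eisenstein-Jacobi integers with norm $N(x+y\rho)=x^2+xy+y^2$. For $0\ne\alpha\in\mathbb{Z}[\rho]$ with $N(\alpha)\ge 7$, the Eisenstein-Jacobi graph $EJ_\alpha$ is the Cayley graph on the additive group of $\mathbb{Z}[\rho]/(\alpha)$ with connection set $\{\pm[1]_\alpha,\pm[\rho]_\alpha,\pm[\rho^2]_\alpha\}$, i.e. $[\xi]_\alpha,[\eta]_\alpha$ are adjacent iff their difference is one of these six classes. For $n\ge 7$, $\mathbb{Z}_n$ denotes integers mod $n$ with classes $[m]$ and unit group $\mathbb{Z}_n^*$ acting by multiplication; $\mathrm{Cay}(K,S)$ is the Cayley graph ($x\sim y$ iff $xy^{-1}\in S$); $TL_n(a,b,c)=\mathrm{Cay}(\mathbb{Z}_n,\{\pm[a],\pm[b],\pm[c]\})$ when $a,b,c,n-a,n-b,n-c$ are pairwise distinct mod $n$. A Frobenius group is a transitive, non-regular permutation group in which only the identity fixes two points; a finite one is $K\rtimes H$ with regular normal kernel $K$ and point stabiliser $H$ acting on $K$ by conjugation. A first-kind $K\rtimes H$-Frobenius graph is $\mathrm{Cay}(K,s^H)$ with $\langle s^H\rangle=K$ and $|H|$ even or $s$ an involution. A 6-valent first-kind Frobenius circulant with cyclic kernel is a 6-valent $TL_n(a,b,c)$ that is a first-kind $\mathbb{Z}_n\rtimes H$-Frobenius graph for some $H\le \mathbb{Z}_n^*$ with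 $\mathbb{Z}_n\rtimes H$ (acting by $[x]^{([y],[m])}=[(x+y)m]$) a Frobenius group with kernel $\mathbb{Z}_n$. *)

From HB Require Import structures.
From mathcomp Require Import all_boot all_order all_algebra all_fingroup.
Set Implicit Arguments. Unset Strict Implicit. Unset Printing Implicit Defensive.
Import Order.TTheory GRing.Theory Num.Theory.
Local Open Scope ring_scope.

(* x + y rho is encoded by the pair (x, y); rho^2 = rho - 1. *)
Definition ej := (int * int)%type.

Definition ej_add (u v : ej) : ej := (u.1 + v.1, u.2 + v.2).
Definition ej_sub (u v : ej) : ej := (u.1 - v.1, u.2 - v.2).
(* (a + b rho)(c + d rho) = (ac - bd) + (ad + bc + bd) rho *)
Definition ej_mul (u v : ej) : ej :=
  (u.1 * v.1 - u.2 * v.2, u.1 * v.2 + u.2 * v.1 + u.2 * v.2).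
Definition ej_norm (u : ej) : int := u.1 ^+ 2 + u.1 * u.2 + u.2 ^+ 2.

Definition ej_cong (alpha xi eta : ej) : Prop :=
  exists gamma : ej, ej_sub xi eta = ej_mul alpha gamma.

(* the six units 1, rho, rho^2 = -1 + rho and their negatives *)
Definition ej_units : seq ej :=
  [:: (1, 0); (-1, 0); (0, 1); (0, -1); (-1, 1); (1, -1)].

Definition ej_adj (alpha xi eta : ej) : Prop :=
  exists2 u, u \in ej_units & ej_cong alpha (ej_sub xi eta) u.

Definition tl_list (n : nat) (a b c : int) : seq 'Z_n :=
  [:: a%:~R; - a%:~R; b%:~R; - b%:~R; c%:~R; - c%:~R].
Definition tl_set (n : nat) (a b c : int) : {set 'Z_n} := [set x in tl_list n a b c].
Definition tl_adj (n : nat) (a b c : int) (x y : 'Z_n) : bool :=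
  (x - y) \in tl_set n a b c.

(* EJ_alpha is isomorphic to TL_n(a,b,c): a bijection Z[rho]/(alpha) -> Z_n
   (presented as a map on representatives that is well defined and injective
   on classes, and surjective) preserving and reflecting adjacency. *)
Definition ej_iso_tl (alpha : ej) (n : nat) (a b c : int) : Prop :=
  exists f : ej -> 'Z_n,
    [/\ (forall xi eta, f xi = f eta <-> ej_cong alpha xi eta),
        (forall x : 'Z_n, exists xi, f xi = x) &
        (forall xi eta, ej_adj alpha xi eta <-> tl_adj a b c (f xi) (f eta))].

Definition frob_act (n : nat) (y : 'Z_n) (m : {unit 'Z_n}) (x : 'Z_n) : 'Z_n :=
  (x + y) * FinRing.uval m.

Definition is_id_perm (n : nat) (y : 'Z_n) (m : {unit 'Z_n}) : Prop :=
  forall x, frob_act y m x = x.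

Definition frobenius_ZH (n : nat) (H : {group {unit 'Z_n}}) : Prop :=
  [/\
      (forall x z : 'Z_n, exists y, exists2 m, m \in H & frob_act y m x = z),
      (exists y, exists2 m, m \in H &
         ~ is_id_perm y m /\ exists x, frob_act y m x = x),
      (forall y m, m \in H -> forall x1 x2, x1 != x2 ->
         frob_act y m x1 = x1 -> frob_act y m x2 = x2 -> is_id_perm y m) &
      (* the Frobenius kernel (identity + fixed-point-free elements) is
         the translation subgroup Z_n *)
      (forall y m, m \in H ->
         (is_id_perm y m \/ (forall x, frob_act y m x != x)) <-> m = 1%g)].

(* 6-valent first-kind Frobenius circulant with cyclic kernel:
   TL_n(a,b,c) (six distinct elements) equal to Cay(Z_n, s^H), a first-kind
   Z_n x| H - Frobenius graph. *)
Definition frob_circ6 (n : nat) (a b c : int) : Prop :=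
  [/\ (7 <= n)%N, uniq (tl_list n a b c) &
      exists H : {group {unit 'Z_n}}, frobenius_ZH H /\
      exists s : 'Z_n,
        [/\ tl_set n a b c = [set s * FinRing.uval h | h in H],
            (<<[set s * FinRing.uval h | h in H]>> = [set: 'Z_n])%g &
            (~~ odd #|H| \/ (s != 0 /\ s + s = 0))]].

From HB Require Import structures.
From mathcomp Require Import all_boot all_order all_algebra all_fingroup.
From mathcomp Require Import pgroup.
From mathcomp Require Import zify ring.
From Stdlib Require Import PeanoNat.
Set Implicit Arguments. Unset Strict Implicit. Unset Printing Implicit Defensive.
Import Order.TTheory GRing.Theory Num.Theory FinRing.Theory.
Local Open Scope ring_scope.

(* A primitive alpha = c + d rho of norm N gives Z[rho]/(alpha) ~ Z_N, rho being
   sent to a root e of X^2 - X + 1 mod N, and this turns EJ_alpha into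
   TL_N(e, e - 1, 1), whose connection set is the orbit of 1 under the group
   <e> of order 6.  When N = 1 mod 6, every e^k - 1 (0 < k < 6) is a unit, so
   Z_N x| <e> is Frobenius.  Conversely a complement of order 6 has an element
   of order 3, which is impossible when 3 | N, and a primitive norm is odd.
   For (a), Thue's lemma gives x = a y mod n with x^2 - x y + y^2 = n, and
   alpha = x - y rho is the required element, in the second family with r = 0. *)

Lemma Zp_nat_eq0 (n m : nat) : (1 < n)%N -> ((m%:R : 'Z_n) = 0) <-> (n %| m)%N.
Proof.
move=> n_gt1; split=> [m0|/eqP m_mod].
  by rewrite /dvdn -val_Zp_nat // m0.
by apply: val_inj; rewrite /= val_Zp_nat.
Qed.

Lemma Zp_int_eq0 (n : nat) (z : int) : (1 < n)%N ->
  ((z%:~R : 'Z_n) = 0) <-> (n%:Z %| z)%Z.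
Proof.
move=> n_gt1; case: z => m; first by rewrite -pmulrn Zp_nat_eq0 // dvdzE.
rewrite NegzE mulrNz dvdzE abszN -pmulrn -Zp_nat_eq0 //.
by split=> [/eqP|->]; rewrite ?oppr0 // oppr_eq0 => /eqP.
Qed.

Lemma Zp_int_eq (n : nat) (x y : int) : (1 < n)%N ->
  ((x%:~R : 'Z_n) = y%:~R) <-> (n%:Z %| x - y)%Z.
Proof.
move=> n_gt1; rewrite -Zp_int_eq0 // intrB.
by split=> [->|/eqP]; rewrite ?subrr // subr_eq0 => /eqP.
Qed.

Lemma card_Zp_gt1 (n : nat) : (1 < n)%N -> #|'Z_n| = n.
Proof. by move=> n_gt1; rewrite card_ord Zp_cast. Qed.

Definition ej_to_Zp (n : nat) (e : int) (xi : ej) : 'Z_n := (xi.1 + xi.2 * e)%:~R.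

Lemma ej_to_Zp_sub (n : nat) (e : int) (xi eta : ej) :
  ej_to_Zp n e (ej_sub xi eta) = ej_to_Zp n e xi - ej_to_Zp n e eta.
Proof. by rewrite /ej_to_Zp -intrB; congr (_%:~R); rewrite /=; ring. Qed.

Lemma map_ej_to_Zp_units (n : nat) (e : int) :
  map (ej_to_Zp n e) ej_units = rot 4 (tl_list n e (e - 1) 1).
Proof.
rewrite /ej_to_Zp /ej_units /tl_list /rot /=.
rewrite !(mul0r, addr0, add0r, mul1r, mulN1r, intrN, intrB).
by rewrite opprB intrD addrC.
Qed.

Section ReductionModNorm.

Variables (n : nat) (c d e : int).
Hypotheses (n_gt1 : (1 < n)%N) (norm_cd : c ^+ 2 + c * d + d ^+ 2 = n%:Z).
Hypotheses (dvd_cde : (n%:Z %| c + d * e)%Z) (dvd_e : (n%:Z %| e ^+ 2 - e + 1)%Z).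

Lemma ej_to_Zp_eq (xi eta : ej) :
  ej_to_Zp n e xi = ej_to_Zp n e eta <-> ej_cong (c, d) xi eta.
Proof.
move: dvd_cde dvd_e => /dvdzP[q1 hq1] /dvdzP[q2 hq2].
case: xi eta => [x1 x2] [y1 y2].
rewrite /ej_to_Zp /ej_cong /ej_sub /ej_mul /= Zp_int_eq //.
have n_neq0 : n%:Z != 0 by lia.
split=> [/dvdzP[q0 hq0]|[[g1 g2]] /= [h1 h2]]; last first.
  apply/dvdzP; exists ((g1 + g2 * e) * q1 - g2 * d * q2).
  transitivity ((x1 - y1) + (x2 - y2) * e); first by ring.
  rewrite h1 h2.
  transitivity ((g1 + g2 * e) * (c + d * e) - g2 * d * (e ^+ 2 - e + 1)); first by ring.
  by rewrite hq1 hq2; ring.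
(* gamma = (xi - eta) * conj(c + d rho) / n, divided exactly using the residues q0, q1, q2 *)
exists ((x1 - y1) * q1 + d * (1 - e) * q0 + d * (x2 - y2) * q2,
        (x2 - y2) * q1 - d * q0) => /=.
congr (_, _); symmetry; apply: (mulfI n_neq0).
  transitivity (c * ((x1 - y1) * (q1 * n) + d * (1 - e) * (q0 * n) + d * (x2 - y2) * (q2 * n))
                - d * ((x2 - y2) * (q1 * n) - d * (q0 * n))); first by ring.
  rewrite -hq0 -hq1 -hq2.
  transitivity ((x1 - y1) * (c ^+ 2 + c * d + d ^+ 2)); first by ring.
  by rewrite norm_cd; ring.
transitivity (c * ((x2 - y2) * (q1 * n) - d * (q0 * n))
              + d * ((x1 - y1) * (q1 * n) + d * (1 - e) * (q0 * n) + d * (x2 - y2) * (q2 * n))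
              + d * ((x2 - y2) * (q1 * n) - d * (q0 * n))); first by ring.
rewrite -hq0 -hq1 -hq2.
transitivity ((x2 - y2) * (c ^+ 2 + c * d + d ^+ 2)); first by ring.
by rewrite norm_cd; ring.
Qed.

Lemma ej_iso_tl_of_root : ej_iso_tl (c, d) n e (e - 1) 1.
Proof.
exists (ej_to_Zp n e); split; first exact: ej_to_Zp_eq.
  move=> x; exists ((x : nat)%:Z, 0).
  by rewrite /ej_to_Zp /= mul0r addr0 -pmulrn natr_Zp.
move=> xi eta; rewrite /ej_adj /tl_adj /tl_set inE -ej_to_Zp_sub.
rewrite -(mem_rot 4) -map_ej_to_Zp_units; split.
  by case=> u u_unit /ej_to_Zp_eq ->; apply: map_f.
by case/mapP=> u u_unit hu; exists u => //; apply/ej_to_Zp_eq; rewrite hu.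
Qed.

End ReductionModNorm.

(* The form x^2 - x y + y^2 is 0 or 3 mod 4 when x, y are both even, and odd
   otherwise; so it never takes the value 2 mod 4. *)
Lemma eisenstein_form_neq_2mod4 (x y w : int) : x ^+ 2 - x * y + y ^+ 2 != 4 * w + 2.
Proof.
have := divz_eq x 2; have := divz_eq y 2.
have := modz_ge0 x (isT : (2:int) != 0); have := modz_ge0 y (isT : (2:int) != 0).
have := ltz_pmod x (isT : (0:int) < 2); have := ltz_pmod y (isT : (0:int) < 2).
move: (x %/ 2)%Z (y %/ 2)%Z (x %% 2)%Z (y %% 2)%Z => u v rx ry.
move=> ry_lt rx_lt ry_ge rx_ge -> ->; apply/eqP => hw.
have [e1|e1] : rx = 0 \/ rx = 1 by lia.
all: have [e2|e2] : ry = 0 \/ ry = 1 by lia.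
all: by rewrite e1 e2 in hw; lia.
Qed.

Lemma eisenstein_form_gt0 (x y : int) : (x != 0) || (y != 0) ->
  0 < x ^+ 2 - x * y + y ^+ 2.
Proof.
have sq_gt0 (z : int) : z != 0 -> 0 < z ^+ 2 by rewrite lt_def sqrf_eq0 sqr_ge0 => ->.
move=> xy_neq0; have := sqr_ge0 (2 * y - x); have := sqr_ge0 (2 * x - y).
by case/orP: xy_neq0 => /sq_gt0; lia.
Qed.

Lemma eisenstein_form_lt3 (n s t : nat) (x y : int) :
  (s * s <= n)%N -> (t * s.+1 <= n)%N -> (t <= s)%N -> (0 < n)%N ->
  `|x| <= s%:Z -> `|y| <= t%:Z -> x ^+ 2 - x * y + y ^+ 2 < 3 * n%:Z.
Proof.
move=> s_sq t_le t_le_s n_gt0 x_le y_le.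
have p1 : 0 <= (s%:Z + x) * (t%:Z + y) by apply: mulr_ge0; lia.
have p2 : 0 <= (s%:Z - x) * (t%:Z - y) by apply: mulr_ge0; lia.
have p3 : 0 <= (s%:Z - x) * (s%:Z + x) by apply: mulr_ge0; lia.
have p4 : 0 <= (t%:Z - y) * (t%:Z + y) by apply: mulr_ge0; lia.
have p5 : 0 <= t%:Z * (s%:Z - t%:Z) by apply: mulr_ge0; lia.
have ts_lt : t%:Z * s%:Z < n%:Z.
  by have [->|t_neq0] := eqVneq t 0%N; [rewrite mul0r; lia | lia].
lia.
Qed.

(* Thue's lemma with the box [-s, s] x [-t, t], s = isqrt n, t = n / (s + 1):
   (s + 1) (t + 1) > n pairs, so two of them have the same x - a y mod n. *)
Lemma thue_small_solution (n : nat) (a : int) : (1 < n)%N ->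
  exists x y : int, [/\ (x != 0) || (y != 0), (n%:Z %| x - a * y)%Z
                      & x ^+ 2 - x * y + y ^+ 2 < 3 * n%:Z].
Proof.
move=> n_gt1; pose s := Nat.sqrt n; pose t := (n %/ s.+1)%N.
have [s_sq sS_sq] : (s * s <= n /\ n < s.+1 * s.+1)%N.
  by have := Nat.sqrt_spec n; rewrite /s; lia.
have t_le : (t * s.+1 <= n)%N by rewrite leq_divM.
have tS_gt : (n < t.+1 * s.+1)%N.
  by rewrite [in X in (X < _)%N](divn_eq n s.+1) mulSn addnC ltn_add2r ltn_mod.
have t_le_s : (t <= s)%N.
  by rewrite -ltnS -(ltn_pmul2r (ltn0Sn s)); apply: leq_ltn_trans t_le sS_sq.
pose phi (p : 'I_s.+1 * 'I_t.+1) : 'Z_n := ((p.1 : nat)%:Z - a * (p.2 : nat)%:Z)%:~R.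
have : ~~ injectiveb phi.
  by apply/negP => /injectiveP/leq_card; rewrite card_prod !card_ord Zp_cast //; lia.
case/injectivePn => [[i j] [[i' j'] ij_neq /(Zp_int_eq _ _ n_gt1) dvd_ij]].
exists ((i : nat)%:Z - (i' : nat)%:Z), ((j : nat)%:Z - (j' : nat)%:Z).
have := ltn_ord i; have := ltn_ord i'; have := ltn_ord j; have := ltn_ord j' => *.
split.
- rewrite -negb_and; apply: contra ij_neq => /andP[/eqP i_eq /eqP j_eq].
  by rewrite xpair_eqE; apply/andP; split; apply/eqP/val_inj => /=; lia.
- by move: dvd_ij; congr (_ %| _)%Z; ring.
- by apply: (eisenstein_form_lt3 s_sq t_le t_le_s); lia.
Qed.

(* At a Thue vector the form is a multiple of n (as x = a y and a^2 - a + 1 = 0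
   mod n) lying in (0, 3n), and it is not 2n = 2 mod 4. *)
Lemma thue_norm_rep (n : nat) (a : int) : (7 <= n)%N -> n = 1 %[mod 6] ->
  (n%:Z %| a ^+ 2 - a + 1)%Z ->
  exists x y : int, (n%:Z %| x - a * y)%Z /\ x ^+ 2 - x * y + y ^+ 2 = n%:Z.
Proof.
move=> n_ge7 n_mod6 /dvdzP[k hk].
have [x [y [xy_neq0 dvd_xy Q_lt]]] := thue_small_solution a (ltac:(lia) : (1 < n)%N).
exists x, y; split=> //; move: dvd_xy => /dvdzP[q hq].
have Q_mul : x ^+ 2 - x * y + y ^+ 2 = n%:Z * (q * (x + a * y - y) + y ^+ 2 * k).
  transitivity ((x - a * y) * (x + a * y - y) + y ^+ 2 * (a ^+ 2 - a + 1)); first by ring.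
  by rewrite hq hk; ring.
have Q_gt0 := eisenstein_form_gt0 xy_neq0.
have Q_neq := eisenstein_form_neq_2mod4 x y ((n %/ 6)%N%:Z * 3).
move: Q_gt0 Q_lt Q_neq; rewrite Q_mul; set m := (q * _ + _ : int).
have n_gt0 : 0 < n%:Z by lia.
rewrite (pmulr_rgt0 _ n_gt0) [3 * _]mulrC (ltr_pM2l n_gt0) => m_gt0 m_lt3.
have [->|->] : m = 1 \/ m = 2 by lia.
  by rewrite mulr1.
by have := divn_eq n 6; rewrite n_mod6; lia.
Qed.

(* Bezout witness: N (t c + (t - t a + d k) d) = N. *)
Lemma gcdz_eq1_of_norm (c d a k t N : int) : N != 0 ->
  c ^+ 2 + c * d + d ^+ 2 = N -> c + a * d = t * N -> a ^+ 2 - a + 1 = k * N ->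
  gcdz c d = 1%N.
Proof.
move=> N_neq0 normN ht hk.
have bezout : t * c + (t - t * a + d * k) * d = 1.
  apply: (mulfI N_neq0); rewrite mulr1.
  transitivity ((t * N) * c + (t * N) * d - (t * N) * a * d + d ^+ 2 * (k * N)); first by ring.
  by rewrite -ht -hk -normN; ring.
have : (gcdz c d %| t * c + (t - t * a + d * k) * d)%Z.
  by apply: rpredD; apply: dvdz_mull; rewrite ?dvdz_gcdl ?dvdz_gcdr.
by rewrite bezout dvdz1 => /eqP; rewrite /gcdz /= => ->.
Qed.

Lemma norm_rep_circulant (n : nat) (a : int) : (7 <= n)%N -> n = 1 %[mod 6] ->
  forall k : int, a ^+ 2 - a + 1 = k * n%:Z ->
  exists c d : int,
    [/\ gcdz c d = 1%N, ej_iso_tl (c, d) n a (a - 1) 1 &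
        exists s : int,
          [/\ d = s * n%:Z + c * (a - 1) &
              k * c ^+ 2 + (2 * a - 1) * s * c + s ^+ 2 * n%:Z = 1]].
Proof.
move=> n_ge7 n_mod6 k hk.
have n_neq0 : n%:Z != 0 by lia.
have dvd_a : (n%:Z %| a ^+ 2 - a + 1)%Z by apply/dvdzP; exists k.
have [x [y [/dvdzP[t ht] normN]]] := thue_norm_rep n_ge7 n_mod6 dvd_a.
exists x, (- y); split.
- by apply: (gcdz_eq1_of_norm (t := t) n_neq0 _ _ hk); [rewrite -normN | rewrite -ht]; ring.
- apply: ej_iso_tl_of_root => //; first lia.
  + by rewrite -normN; ring.
  + by apply/dvdzP; exists t; rewrite -ht; ring.
exists (- y * k - t * (a - 1)).
have hs : (- y * k - t * (a - 1)) * n%:Z = - y - x * (a - 1).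
  transitivity (- y * (k * n) - (t * n) * (a - 1)); first by ring.
  by rewrite -hk -ht; ring.
split; first by rewrite hs; ring.
apply: (mulfI n_neq0); rewrite mulr1.
transitivity ((k * n) * x ^+ 2 + (2 * a - 1) * ((- y * k - t * (a - 1)) * n%:Z) * x
              + ((- y * k - t * (a - 1)) * n%:Z) ^+ 2); first by ring.
by rewrite hs -hk -normN; ring.
Qed.

Lemma mulr_unit_eq0 (R : finUnitRingType) (u : {unit R}) (x : R) :
  x * FinRing.uval u = 0 -> x = 0.
Proof.
move=> xu0; have u_unit : FinRing.uval u \is a GRing.unit by case: u {xu0}.
by rewrite -[x](mulrK u_unit) xu0 mul0r.
Qed.

(* A nontrivial complement element m fixes 0; fixing a second point x would
   force it to be the identity, so m - 1 is a non-zero-divisor. *)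
Lemma frobenius_ZH_subr1_reg (n : nat) (H : {group {unit 'Z_n}}) :
  frobenius_ZH H -> forall m, m \in H -> m != 1%g ->
  forall x : 'Z_n, x * (FinRing.uval m - 1) = 0 -> x = 0.
Proof.
case=> _ _ fix2 _ m mH m_neq1 x hx; apply/eqP/negPn/negP => x_neq0.
have fix_m := fix2 0 m mH x 0 x_neq0.
move: m_neq1; rewrite -(inj_eq val_inj) /=.
suff -> : FinRing.uval m = 1 by rewrite eqxx.
have := fix_m _ _ 1; rewrite /frob_act !addr0 mul0r mul1r; apply=> //.
by move/eqP: hx; rewrite mulrBr mulr1 subr_eq0 => /eqP.
Qed.

Lemma frob_circ6_complement (n : nat) (a b e : int) : frob_circ6 n a b e ->
  exists2 H : {group {unit 'Z_n}}, frobenius_ZH H & #|H| = 6%N.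
Proof.
case=> n_ge7 tl_uniq [H [frobH [s [tl_orbit _ _]]]]; exists H => //.
have reg := frobenius_ZH_subr1_reg frobH.
have orbit6 : #|[set s * FinRing.uval h | h in H]| = 6%N.
  by rewrite -tl_orbit /tl_set cardsE; move/card_uniqP: tl_uniq.
have s_neq0 : s != 0.
  apply: contra_eqN orbit6 => /eqP ->.
  suff -> : [set 0 * FinRing.uval h | h in H] = [set 0] by rewrite cards1.
  apply/setP => z; rewrite !inE; apply/imsetP/eqP => [[h _ ->]|->]; first by rewrite mul0r.
  by exists 1%g; rewrite ?group1 // mul0r.
rewrite -orbit6 card_in_imset // => h h' hH h'H /eqP.
rewrite -subr_eq0 -mulrBr => /eqP shh'; apply/eqP/negPn/negP => hh'.
have m_neq1 : (h'^-1 * h)%g != 1%g by rewrite -eq_mulVg1 eq_sym.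
have mH : (h'^-1 * h)%g \in H by rewrite groupM ?groupV.
have := reg _ mH m_neq1 (s * FinRing.uval h').
rewrite val_unitM val_unitV -mulrA mulrBr mulr1 mulrA mulrV ?mul1r; last by case: (h').
by move=> /(_ shh') /mulr_unit_eq0 s0; rewrite s0 eqxx in s_neq0.
Qed.

(* If 3 | n, an element m of order 3 in the complement gives
   (n/3) (m - 1)^2 = (n/3) (m^2 + m + 1) - n m = 0, contradicting regularity. *)
Lemma frobenius_ZH_not_dvd3 (n : nat) (H : {group {unit 'Z_n}}) :
  (1 < n)%N -> frobenius_ZH H -> (3 %| #|H|)%N -> ~~ (3 %| n)%N.
Proof.
move=> n_gt1 frobH dvd3H; have reg := frobenius_ZH_subr1_reg frobH.
have [x xH ox] : {x | x \in H & #[x]%g = 3%N} by apply: Cauchy.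
have x_neq1 : x != 1%g by apply: contra_eqN ox => /eqP ->; rewrite order1.
pose m := FinRing.uval x.
have m3 : m ^+ 3 = 1 by rewrite /m -val_unitX -ox expg_order.
have m_cyclo : m ^+ 2 + m + 1 = 0.
  apply: (reg _ xH x_neq1); rewrite -/m.
  by transitivity (m ^+ 3 - 1); [ring | rewrite m3 subrr].
apply/negP => /dvdnP[q n_eq].
pose z : 'Z_n := q%:R.
have z_neq0 : z != 0.
  by apply/eqP => /(Zp_nat_eq0 _ n_gt1)/dvdn_leq; lia.
have z3 : 3 * z = 0 by rewrite /z -natrM mulnC -n_eq pchar_Zp.
have : z * (m - 1) * (m - 1) = 0.
  transitivity (z * (m ^+ 2 + m + 1) - (3 * z) * m); first by ring.
  by rewrite m_cyclo z3; ring.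
by move/(reg _ xH x_neq1)/(reg _ xH x_neq1)/eqP; apply/negP.
Qed.

Section PrimitiveSixthRoot.

Variables (R : comUnitRingType) (E : R).
Hypotheses (E_cyclo : E ^+ 2 - E + 1 = 0).
Hypotheses (unit2 : (2 : R) \is a GRing.unit) (unit3 : (3 : R) \is a GRing.unit).

Lemma cyclo6_exp3 : E ^+ 3 = -1.
Proof.
by transitivity ((E + 1) * (E ^+ 2 - E + 1) - 1); [ring | rewrite E_cyclo mulr0 sub0r].
Qed.

Lemma cyclo6_unit : E \is a GRing.unit.
Proof.
apply/unitrPr; exists (1 - E); apply/eqP; rewrite -subr_eq0; apply/eqP.
by rewrite -oppr0 -E_cyclo; ring.
Qed.

(* The inverses of E - 1, ..., E^5 - 1 modulo E^2 - E + 1 are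
   -E, -(E + 1)/3, -1/2, (E - 2)/3 and E - 1. *)
Lemma cyclo6_expB1_unit (k : nat) : (0 < k < 6)%N -> E ^+ k - 1 \is a GRing.unit.
Proof.
pose i2 : R := 2^-1; pose i3 : R := 3^-1.
have h2 : 2 * i2 = 1 by rewrite mulrV.
have h3 : 3 * i3 = 1 by rewrite mulrV.
move=> k_range; suff [w hw] : exists w, (E ^+ k - 1) * w = 1 by apply/unitrPr; exists w.
move: k k_range => [//|[|[|[|[|[|//]]]]]] _.
- exists (- E); transitivity (1 - (E ^+ 2 - E + 1)); first by ring.
  by rewrite E_cyclo subr0.
- exists (- (E + 1) * i3).
  transitivity (- i3 * (E + 2) * (E ^+ 2 - E + 1) + 3 * i3); first by ring.
  by rewrite E_cyclo h3; ring.
- exists (- i2).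
  transitivity (- i2 * (E + 1) * (E ^+ 2 - E + 1) + 2 * i2); first by ring.
  by rewrite E_cyclo h2; ring.
- exists ((E - 2) * i3).
  transitivity (i3 * (E ^+ 3 - E ^+ 2 - 2 * E - 1) * (E ^+ 2 - E + 1) + 3 * i3).
    by ring.
  by rewrite E_cyclo h3; ring.
- exists (E - 1); transitivity ((E ^+ 4 - E ^+ 2 - E) * (E ^+ 2 - E + 1) + 1).
    by ring.
  by rewrite E_cyclo; ring.
Qed.

Lemma cyclo6_exp_inj (i j : nat) : (i < 6)%N -> (j < 6)%N -> E ^+ i = E ^+ j -> i = j.
Proof.
wlog ij : i j / (i <= j)%N => [hwlog|] i_lt j_lt Eij.
  by case/orP: (leq_total i j) => /hwlog; [apply | move=> h; symmetry; apply: h].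
apply/eqP; rewrite eqn_leq ij /= leqNgt; apply/negP => ij_lt.
have unitB : E ^+ (j - i) - 1 \is a GRing.unit.
  by apply: cyclo6_expB1_unit; rewrite subn_gt0 ij_lt /=; lia.
have : E ^+ i * (E ^+ (j - i) - 1) = 0.
  by rewrite mulrBr mulr1 -exprD subnKC // Eij subrr.
move/(congr1 (fun x => x \is a GRing.unit)).
by rewrite unitrM unitB unitrX ?cyclo6_unit // unitr0.
Qed.

End PrimitiveSixthRoot.

Lemma frob_act_fixed2 (n : nat) (y : 'Z_n) (m : {unit 'Z_n}) (x1 x2 : 'Z_n) :
  frob_act y m x1 = x1 -> frob_act y m x2 = x2 -> (x1 - x2) * (FinRing.uval m - 1) = 0.
Proof.
rewrite /frob_act => f1 f2.
transitivity ((x1 + y) * FinRing.uval m - (x2 + y) * FinRing.uval m - x1 + x2); first by ring.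
by rewrite f1 f2; ring.
Qed.

Section FrobeniusCriterion.

Variables (n : nat) (H : {group {unit 'Z_n}}).
Hypothesis H_nontrivial : H != 1%G.
Hypothesis H_reg : forall m, m \in H -> m != 1%g -> FinRing.uval m - 1 \is a GRing.unit.

Lemma frobenius_ZH_of_reg : frobenius_ZH H.
Proof.
have reg m x : m \in H -> m != 1%g -> x * (FinRing.uval m - 1) = 0 -> x = 0.
  move=> mH m_neq1 /(congr1 (fun z => z / (FinRing.uval m - 1))).
  by rewrite mulrK ?H_reg // mul0r.
have Zp10 : (1 : 'Z_n) != 0 by rewrite oner_eq0.
have [m mH m_neq1] : exists2 m, m \in H & m != 1%g.
  apply/exists_inP; apply: contraR H_nontrivial => /exists_inPn H1.
  by apply/eqP/trivGP/subsetP => h hH; rewrite inE; apply/negPn/H1.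
split.
- move=> x z; exists (z - x), 1%g; first exact: group1.
  by rewrite /frob_act val_unit1 mulr1 addrC subrK.
- exists 0, m => //; split; last by exists 0; rewrite /frob_act addr0 mul0r.
  move=> /(_ 1); rewrite /frob_act addr0 mul1r => m1.
  have := reg m 1 mH m_neq1; rewrite m1 subrr mulr0 => /(_ erefl)/eqP.
  by rewrite (negbTE Zp10).
- move=> y h hH x1 x2 x12 f1 f2; case: (eqVneq h 1%g) => [h1|h_neq1].
    move: f1; rewrite /is_id_perm /frob_act h1 val_unit1 mulr1 => /eqP.
    by rewrite -subr_eq0 addrC addKr => /eqP y0 x; rewrite y0 addr0 mulr1.
  move: x12 (frob_act_fixed2 f1 f2) => /negP x12 /(reg _ _ hH h_neq1)/eqP.
  by rewrite subr_eq0.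
move=> y h hH; split=> [|->]; last first.
- have [->|y_neq0] := eqVneq y 0.
    by left=> x; rewrite /frob_act addr0 val_unit1 mulr1.
  right=> x; rewrite /frob_act val_unit1 mulr1.
  by apply: contra y_neq0 => /eqP xy; apply/eqP; rewrite -(addKr x y) xy addNr.
case=> [h_id|h_fpf]; have [//|h_neq1] := eqVneq h 1%g; exfalso.
- have y0 : y = 0 by move: (h_id 0); rewrite /frob_act add0r => /mulr_unit_eq0.
  move: (h_id 1); rewrite /frob_act y0 addr0 mul1r => h1.
  by move/eqP: h_neq1; apply; apply: val_inj; rewrite /= h1.
- have := divrr (H_reg hH h_neq1); set u := FinRing.uval h; set v := _^-1 => uv.
  move: (h_fpf (- y * u * v)) => /eqP; apply; rewrite /frob_act -/u.
  transitivity (- y * u * v + y * u * (1 - (u - 1) * v)); first by ring.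
  by rewrite uv subrr mulr0 addr0.
Qed.

End FrobeniusCriterion.

Lemma unit2_unit3_Zp (n : nat) : (1 < n)%N -> n = 1 %[mod 6] ->
  (2 : 'Z_n) \is a GRing.unit /\ (3 : 'Z_n) \is a GRing.unit.
Proof.
move=> n_gt1 n_mod6; rewrite !unitZpE //; have := divn_eq n 6; rewrite n_mod6.
split; first by rewrite coprime_sym coprime2n; lia.
by rewrite coprime_sym prime_coprime //; apply/negP => /dvdnP[q]; lia.
Qed.

(* In the %g structure of 'Z_n the product is the addition, so a unit x generates. *)
Lemma Zp_unit_gen (n : nat) (x : 'Z_n) (A : {set 'Z_n}) :
  x \is a GRing.unit -> x \in A -> (<<A>> = [set: 'Z_n])%g.
Proof.
move=> x_unit xA; apply/eqP; rewrite eqEsubset subsetT /= Zp_cycle cycle_subG.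
pose x' : 'Z_n := x^-1.
have -> : Zp1 = (x ^+ x')%g by rewrite zmodXgE -mulr_natr natr_Zp divrr.
exact/groupX/mem_gen.
Qed.

Lemma tl_list_cyclo6 (n : nat) (e : int) :
  let E : 'Z_n := e%:~R in E ^+ 2 - E + 1 = 0 ->
  tl_list n e (e - 1) 1 = [seq E ^+ i | i <- [:: 1; 4; 2; 5; 0; 3]%N].
Proof.
move=> E E_cyclo; have E3 := cyclo6_exp3 E_cyclo.
have E2 : E ^+ 2 = E - 1 by apply/eqP; rewrite -subr_eq0 -E_cyclo; apply/eqP; ring.
have E4 : E ^+ 4 = - E by rewrite exprS E3 mulrN1.
have E5 : E ^+ 5 = - (E - 1) by rewrite exprS E4 mulrN -expr2 E2.
by rewrite /tl_list /= intrB -/E expr0 expr1 mulr1z E2 E3 E4 E5.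
Qed.

Section CycloSixUnit.

Variables (n : nat) (u : {unit 'Z_n}).
Hypotheses (u_cyclo : FinRing.uval u ^+ 2 - FinRing.uval u + 1 = 0).
Hypotheses (unit2 : (2 : 'Z_n) \is a GRing.unit) (unit3 : (3 : 'Z_n) \is a GRing.unit).

Lemma mem_cycle_cyclo6 (h : {unit 'Z_n}) :
  h \in <[u]>%g -> exists2 i, (i < 6)%N & h = (u ^+ i)%g.
Proof.
have u6 : (u ^+ 6 = 1)%g.
  apply: val_inj; change (FinRing.uval (u ^+ 6)%g = 1).
  by rewrite val_unitX (exprM _ 3 2) cyclo6_exp3 // sqrrN expr1n.
case/cycleP => j ->; exists (j %% 6)%N; first by rewrite ltn_mod.
by rewrite {1}(divn_eq j 6) expgD mulnC expgM u6 expg1n mul1g.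
Qed.

Lemma cycle_cyclo6_reg (h : {unit 'Z_n}) :
  h \in <[u]>%g -> h != 1%g -> FinRing.uval h - 1 \is a GRing.unit.
Proof.
case/mem_cycle_cyclo6 => i i_lt -> ui_neq1.
rewrite val_unitX cyclo6_expB1_unit // i_lt andbT lt0n.
by apply: contraNneq ui_neq1 => ->; rewrite expg0.
Qed.

End CycloSixUnit.

Lemma frob_circ6_of_root (n : nat) (e : int) : (7 <= n)%N -> n = 1 %[mod 6] ->
  (n%:Z %| e ^+ 2 - e + 1)%Z -> frob_circ6 n e (e - 1) 1.
Proof.
move=> n_ge7 n_mod6 dvd_e; have n_gt1 : (1 < n)%N by lia.
have [unit2 unit3] := unit2_unit3_Zp n_gt1 n_mod6.
pose E : 'Z_n := e%:~R.
have E_cyclo : E ^+ 2 - E + 1 = 0.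
  by move/(Zp_int_eq0 _ n_gt1): dvd_e; rewrite expr2 intrD intrB intrM -expr2.
pose u : {unit 'Z_n} := FinRing.Unit (cyclo6_unit E_cyclo).
have tl_pow := tl_list_cyclo6 E_cyclo.
have exps_lt6 : all (fun i => i < 6)%N [:: 1; 4; 2; 5; 0; 3]%N by [].
have tl_uniq : uniq (tl_list n e (e - 1) 1).
  rewrite tl_pow map_inj_in_uniq // => i j /(allP exps_lt6) i_lt /(allP exps_lt6) j_lt.
  exact: cyclo6_exp_inj.
have tl_orbit : tl_set n e (e - 1) 1 = [set 1 * FinRing.uval h | h in <[u]>%G].
  apply/setP => z; rewrite /tl_set inE tl_pow; apply/mapP/imsetP.
    by case=> i _ ->; exists (u ^+ i)%g; rewrite ?mem_cycle // mul1r val_unitX.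
  case=> h /(mem_cycle_cyclo6 (u := u) E_cyclo)[i i_lt ->] ->.
  exists i; last by rewrite mul1r val_unitX.
  by move: i i_lt; do 6!case=> //.
have cycle_u6 : #|<[u]>%g| = 6%N.
  rewrite -(card_in_imset (f := fun h => 1 * FinRing.uval h)); last first.
    by move=> h h' _ _; rewrite !mul1r => /val_inj.
  by rewrite -tl_orbit /tl_set cardsE; apply/card_uniqP.
split=> //; exists <[u]>%G; split.
  apply: frobenius_ZH_of_reg => [|h]; last exact: cycle_cyclo6_reg.
  by apply/eqP => /(congr1 (fun G : {group _} => #|G|)); rewrite /= cycle_u6 cards1.
exists 1; split=> //; last by left; rewrite cycle_u6.
by apply: (Zp_unit_gen unit2); apply/imsetP; exists 1%g; rewrite ?group1.
Qed.

Lemma eisenstein_norm_ge0 (c d : int) : 0 <= c ^+ 2 + c * d + d ^+ 2.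
Proof. by have := sqr_ge0 (2 * c + d); have := sqr_ge0 d; lia. Qed.

Lemma Zp3_cases (x : 'Z_3) : [\/ x = 0, x = 1 | x = 2].
Proof.
by case: x => [[|[|[|//]]]] x_lt; [constructor 1|constructor 2|constructor 3]; apply: val_inj.
Qed.

Lemma Zp2_cases (x : 'Z_2) : x = 0 \/ x = 1.
Proof. by case: x => [[|[|//]]] x_lt; [left|right]; apply: val_inj. Qed.

Lemma intr_eisenstein_norm (m : nat) (c d : int) :
  ((c ^+ 2 + c * d + d ^+ 2)%:~R : 'Z_m) = c%:~R ^+ 2 + c%:~R * d%:~R + d%:~R ^+ 2.
Proof. by rewrite !expr2 !intrD !intrM. Qed.

(* Mod 3 the norm of a coprime pair is 0 or 1; mod 2 it is 1 unless both are even. *)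
Lemma eisenstein_norm_mod6 (c d : int) : gcdz c d = 1%N ->
  ~~ (3 %| c ^+ 2 + c * d + d ^+ 2)%Z -> (c ^+ 2 + c * d + d ^+ 2 = 1 %[mod 6])%Z.
Proof.
move=> cd_coprime not3; set N := c ^+ 2 + c * d + d ^+ 2 in not3 *.
have dvd3 : (3 %| N - 1)%Z.
  rewrite -(Zp_int_eq N 1 (isT : (1 < 3)%N)) /N intr_eisenstein_norm mulr1z.
  have : (N%:~R : 'Z_3) != 0 by apply: contra not3 => /eqP/Zp_int_eq0->.
  rewrite /N intr_eisenstein_norm.
  by case: (Zp3_cases c%:~R) => ->; case: (Zp3_cases d%:~R) => -> h;
    apply/eqP; move: h; apply/implyP.
have dvd2 : (2 %| N - 1)%Z.
  rewrite -(Zp_int_eq N 1 (isT : (1 < 2)%N)) /N intr_eisenstein_norm mulr1z.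
  have : ~~ [&& (c%:~R : 'Z_2) == 0 & (d%:~R : 'Z_2) == 0].
    have Zp2_eq0 z : (z%:~R : 'Z_2) == 0 -> (2 %| z)%Z by move/eqP/Zp_int_eq0; apply.
    apply: contraL (isT : ~~ (2 %| 1)%Z) => /andP[/Zp2_eq0 dvd_c /Zp2_eq0 dvd_d].
    by rewrite -[1%Z]/(Posz 1%N) -cd_coprime dvdz_gcd dvd_c dvd_d.
  by case: (Zp2_cases c%:~R) => ->; case: (Zp2_cases d%:~R) => -> h;
    apply/eqP; move: h; apply/implyP.
apply/eqP; rewrite eqz_mod_dvd (_ : 6 = 2 * 3) //.
by rewrite Gauss_dvdz // dvd2 dvd3.
Qed.

(* With u c + v d = 1 one has d D = -1 mod N, so e = c D is -c/d, the image of rho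
   in Z[rho]/(c + d rho); then d^2 (e^2 - e + 1) = N M and d is invertible mod N. *)
Lemma exists_cyclo6_root_mod_norm (c d : int) : gcdz c d = 1%N ->
  exists e, (c ^+ 2 + c * d + d ^+ 2 %| c + d * e)%Z /\
            (c ^+ 2 + c * d + d ^+ 2 %| e ^+ 2 - e + 1)%Z.
Proof.
move=> cd_coprime; set N := c ^+ 2 + c * d + d ^+ 2.
have [u [v bezout]] := Bezoutz c d; rewrite cd_coprime in bezout.
pose D := u ^+ 2 * c + u ^+ 2 * d - 2 * u * v * c - v ^+ 2 * d.
have dD : d * D = u ^+ 2 * N - 1.
  transitivity (u ^+ 2 * N - (u * c + v * d) ^+ 2); first by rewrite /D /N; ring.
  by rewrite bezout expr1n.
exists (c * D); split.
  apply/dvdzP; exists (c * u ^+ 2).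
  by transitivity (c + c * (d * D)); [ring | rewrite dD; ring].
set E := (c * D) ^+ 2 - c * D + 1.
pose M := 1 - 2 * c ^+ 2 * u ^+ 2 + c ^+ 2 * u ^+ 4 * N - c * d * u ^+ 2.
have d2E : d ^+ 2 * E = N * M.
  transitivity (c ^+ 2 * (d * D) ^+ 2 - c * d * (d * D) + d ^+ 2); first by rewrite /E; ring.
  by rewrite dD /M /N; ring.
have inv_d : u ^+ 2 * N - d * D = 1 by rewrite dD; ring.
apply/dvdzP; exists (E * u ^+ 4 * N - 2 * E * u ^+ 2 * d * D + D ^+ 2 * M).
transitivity (E * (u ^+ 2 * N - d * D) ^+ 2); first by rewrite inv_d expr1n mulr1.
transitivity (E * u ^+ 4 * N ^+ 2 - 2 * E * u ^+ 2 * N * d * D + D ^+ 2 * (d ^+ 2 * E)).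
  by ring.
by rewrite d2E; ring.
Qed.

(* Z[rho]/(c + d rho) ~ Z_N via ej_to_Zp, so a bijection onto Z_n forces n = N. *)
Lemma ej_iso_tl_card (c d e : int) (n : nat) (a b f : int) :
  (1 < n)%N -> (1 < `|(c ^+ 2 + c * d + d ^+ 2)%R|)%N ->
  (c ^+ 2 + c * d + d ^+ 2 %| c + d * e)%Z ->
  (c ^+ 2 + c * d + d ^+ 2 %| e ^+ 2 - e + 1)%Z ->
  ej_iso_tl (c, d) n a b f -> n = `|(c ^+ 2 + c * d + d ^+ 2)%R|%N.
Proof.
set N := c ^+ 2 + c * d + d ^+ 2 => n_gt1 N_gt1 dvd_cde dvd_e [g [g_eq g_onto _]].
set m := `|N|%N in N_gt1 *; have m_N : m%:Z = N by rewrite /m gez0_abs // eisenstein_norm_ge0.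
rewrite -m_N in dvd_cde dvd_e.
have red_eq := ej_to_Zp_eq N_gt1 (esym m_N) dvd_cde dvd_e.
pose h (z : 'Z_m) : 'Z_n := g ((z : nat)%:Z, 0).
have red_h (z : 'Z_m) : ej_to_Zp m e ((z : nat)%:Z, 0) = z.
  by rewrite /ej_to_Zp /= mul0r addr0 -pmulrn natr_Zp.
have h_inj : injective h by move=> z z' /g_eq/red_eq; rewrite !red_h.
have h_onto : [set: 'Z_n] \subset h @: [set: 'Z_m].
  apply/subsetP => x _; have [xi <-] := g_onto x.
  by apply/imsetP; exists (ej_to_Zp m e xi) => //; apply/g_eq/red_eq; rewrite red_h.
apply/eqP; rewrite eqn_leq -(card_Zp_gt1 n_gt1) -(card_Zp_gt1 N_gt1) (leq_card h h_inj).
by move/subset_leq_card: h_onto; rewrite cardsT => /leq_trans->//; rewrite -cardsT leq_imset_card.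
Qed.

Lemma ej_frob_circ6_iff (c d : int) : 7 <= ej_norm (c, d) -> gcdz c d = 1%N ->
  (exists (n : nat) (a b e : int),
     (7 <= n)%N /\ frob_circ6 n a b e /\ ej_iso_tl (c, d) n a b e)
  <-> (ej_norm (c, d) = 1 %[mod 6])%Z.
Proof.
rewrite /ej_norm /=; set N := c ^+ 2 + c * d + d ^+ 2 => N_ge7 cd_coprime.
have [e [dvd_cde dvd_e]] := exists_cyclo6_root_mod_norm cd_coprime; rewrite -/N in dvd_cde dvd_e.
set m := `|N|%N; have m_N : m%:Z = N by rewrite /m gez0_abs //; lia.
have m_ge7 : (7 <= m)%N by lia.
split=> [[n [a [b [f [n_ge7 [frob iso]]]]]]|N_mod6].
  have n_m : n = m by apply: ej_iso_tl_card dvd_cde dvd_e iso; lia.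
  apply: eisenstein_norm_mod6 => //.
  have [H frobH cardH] := frob_circ6_complement frob.
  have := frobenius_ZH_not_dvd3 (ltac:(lia) : (1 < n)%N) frobH (ltac:(by rewrite cardH)).
  by rewrite n_m -[m]absz_nat -(dvdzE 3) m_N.
change (N = 1 %[mod 6])%Z in N_mod6; rewrite -m_N in dvd_cde dvd_e N_mod6.
exists m, e, (e - 1), 1; split=> //; split.
  by apply: frob_circ6_of_root => //; move/eqP: N_mod6; rewrite eqz_mod_dvd => /dvdzP[q]; lia.
by apply: ej_iso_tl_of_root => //; lia.
Qed.

Theorem theorem3p2 :
  (forall (n : nat) (a : int),
     (7 <= n)%N ->
     frob_circ6 n a (a - 1) 1 ->
     n = 1 %[mod 6] ->
     (a ^+ 2 - a + 1 = 0 %[mod n%:Z])%Z ->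
     forall k : int, a ^+ 2 - a + 1 = k * n%:Z ->
     exists c d : int,
       [/\ gcdz c d = 1%N,
           ej_iso_tl (c, d) n a (a - 1) 1 &
           exists m r s : int,
             [\/ (c = r * n%:Z + m /\ d = s * n%:Z - m * a /\
                  k * m ^+ 2 - ((a - 2) * r + (2 * a - 1) * s) * m
                  + (r ^+ 2 + r * s + s ^+ 2) * n%:Z = 1),
                 (c = r * n%:Z + m /\ d = s * n%:Z + m * (a - 1) /\
                  k * m ^+ 2 + ((a + 1) * r + (2 * a - 1) * s) * m
                  + (r ^+ 2 + r * s + s ^+ 2) * n%:Z = 1) |
                 (c = r * n%:Z + m * a /\ d = s * n%:Z - m * (a - 1) /\
                  k * m ^+ 2 + ((a + 1) * r - (a - 2) * s) * m
                  + (r ^+ 2 + r * s + s ^+ 2) * n%:Z = 1)]])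
  /\
  (forall c d : int,
     7 <= ej_norm (c, d) ->
     gcdz c d = 1%N ->
     ((exists (n : nat) (a b e : int),
         (7 <= n)%N /\ frob_circ6 n a b e /\ ej_iso_tl (c, d) n a b e)
      <-> (ej_norm (c, d) = 1 %[mod 6])%Z)).
Proof.
split; last exact: ej_frob_circ6_iff.
move=> n a n_ge7 _ n_mod6 _ k hk.
have [c [d [cd_coprime iso [s [d_eq form_eq]]]]] := norm_rep_circulant n_ge7 n_mod6 hk.
exists c, d; split=> //; exists c, 0, s; constructor 2.
rewrite mul0r add0r d_eq; do 2!split=> //.
by rewrite -[RHS]form_eq; ring.
Qed.
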